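(* Let $G$ and $H$ be groups, $\Psi\colon G\to\operatorname{Aut}H$ a group homomorphism, and $B\colon H\to G$ a relative Rota--Baxter operator on $H$ with respect to $(G,\Psi)$. If $\varphi$ lies in the center of $\operatorname{Aut}H$, then $B\varphi\colon H\to G$ is also a relative Rota--Baxter operator on $H$ with respect to $(G,\Psi)$.
   Context: A relative Rota--Baxter operator on $H$ with respect to $(G,\Psi)$ is a map $B\colon H\to G$ with $B(h)B(k)=B(h\Psi_{B(h)}(k))$ for all $h,k\in H$. *)

From Stdlib Require Import Program.Basics.
Set Implicit Arguments.

Record group := Group {
  gcar :> Type;
  gmul : gcar -> gcar -> gcar;
  gone : gcar;
  ginv : gcar -> gcar;
  gmulA : forall x y z, gmul x (gmul y z) = gmul (gmul x y) z;
  gmul1l : forall x, gmul gone x = x;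
  gmulVl : forall x, gmul (ginv x) x = gone
}.

Definition is_endo (H : group) (f : H -> H) : Prop :=
  forall x y : H, f (gmul H x y) = gmul H (f x) (f y).

Definition bij {A B : Type} (f : A -> B) : Prop :=
  exists g : B -> A, (forall x, g (f x) = x) /\ (forall y, f (g y) = y).

Definition is_aut (H : group) (f : H -> H) : Prop := is_endo H f /\ bij f.

(* Aut H is a group under composition, (a b)(h) = a (b h).
   Psi : G -> Aut H is a group homomorphism. *)
Definition is_hom_to_Aut (G H : group) (Psi : G -> H -> H) : Prop :=
  (forall g : G, is_aut H (Psi g)) /\
  (forall (g1 g2 : G) (h : H), Psi (gmul G g1 g2) h = Psi g1 (Psi g2 h)).

Definition in_center_Aut (H : group) (phi : H -> H) : Prop :=
  is_aut H phi /\
  forall alpha : H -> H, is_aut H alpha -> forall h, phi (alpha h) = alpha (phi h).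

Definition relative_RB (G H : group) (Psi : G -> H -> H) (B : H -> G) : Prop :=
  forall h k : H, gmul G (B h) (B k) = B (gmul H h (Psi (B h) k)).


Lemma relative_RB_comp_endo (G H : group) (Psi : G -> H -> H) (B : H -> G)
  (phi : H -> H) :
  relative_RB G H Psi B ->
  is_endo H phi ->
  (forall (g : G) (h : H), phi (Psi g h) = Psi g (phi h)) ->
  relative_RB G H Psi (fun h => B (phi h)).
Proof.
  intros HB Hphi Hcomm h k; simpl.
  rewrite HB, Hphi, Hcomm.
  reflexivity.
Qed.

Theorem corollary3p7 (G H : group) (Psi : G -> H -> H) (B : H -> G)
  (phi : H -> H) :
  is_hom_to_Aut G H Psi ->
  relative_RB G H Psi B ->
  in_center_Aut H phi ->
  relative_RB G H Psi (fun h => B (phi h)).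
Proof.
  intros [HPsi_aut _] HB [[Hphi _] Hcentral].
  apply relative_RB_comp_endo; [exact HB | exact Hphi |].
  intros g h.
  exact (Hcentral (Psi g) (HPsi_aut g) h).
Qed.
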